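(* Let $m\geq 7$ be an integer. Then for every prime $p$ of the form $p=4m^2n+1$ with $n$ a positive integer, we have $d_m(\mathbb{Z}/p\mathbb{Z})\geq \frac18\left(1-\frac1p\right)$. In particular, $d_m\geq\frac18$.
   Context: For a positive integer $m$, a subset $A$ of an abelian group is $m$-sum-free if there is no triple $(x,y,z)\in A^3$ with $x+y=mz$. For a prime $p$, $d_m(\mathbb{Z}/p\mathbb{Z})=\max\{|A|/p : A\subseteq \mathbb{Z}/p\mathbb{Z}\ \text{is } m\text{-sum-free}\}$. For $m\ge 3$ it is known (from prior work) that $d_m(\mathbb{Z}/p\mathbb{Z})$ converges as $p\to\infty$ through primes; $d_m$ denotes this limit. *)

From HB Require Import structures.
From mathcomp Require Import all_boot all_order all_algebra.
Set Implicit Arguments. Unset Strict Implicit. Unset Printing Implicit Defensive.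
Import Order.TTheory GRing.Theory Num.Theory.
Local Open Scope ring_scope.

Definition m_sum_free (p m : nat) (A : {set 'Z_p}) : bool :=
  [forall x in A, forall y in A, forall z in A, x + y != z *+ m].

Definition max_msf_card (p m : nat) : nat :=
  \max_(A : {set 'Z_p} | m_sum_free m A) #|A|.

Definition dm (R : numFieldType) (m p : nat) : R :=
  (max_msf_card p m)%:R / p%:R.

From HB Require Import structures.
From mathcomp Require Import all_boot all_order all_algebra all_field.
From mathcomp Require Import zify ring lra.
Set Implicit Arguments. Unset Strict Implicit. Unset Printing Implicit Defensive.
Import Order.TTheory GRing.Theory Num.Theory.

(* Write p = 4 m^2 n + 1 and m = 4 b + r with r < 4, and let X = 4 m n b and
   K = m n r, so that 2 X + 2 K < p.  If every element of A lies in the window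
   (-K, X] around 0 and every element of m A lies in (2 X, p - 2 K), then A + A
   lies in (-2 K, 2 X] and misses m A.  Residues 4 m n s + c with s < b and c
   in a block of 2 m n values qualify, as do about m n r / 2 residues just below
   p; this gives |A| >= m^2 n / 2 = (p - 1) / 8.

   For the limit, primes p = 1 mod 4 m^2 are unbounded: a prime factor q of
   Phi_k(c), for c a multiple of k B! with |Phi_k(c)| > 1, exceeds B and has c
   as a primitive k-th root of unity modulo q, so k divides q - 1.  As the real
   field R need not be archimedean, 1/p cannot be made small directly; instead,
   since 8 max|A| >= p - 1, either d_m(Z/pZ) >= 1/8 or d_m(Z/pZ) = (p - 1)/(8p)
   exactly, and two such exact values at p1 < p2 differ by at least twice the
   square of the defect 1/(8 p1), which is incompatible with a limit below 1/8. *)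

Lemma modnMDl_small s p t : t < p -> (s * p + t) %% p = t.
Proof. by move=> tp; rewrite modnMDl modn_small. Qed.

Lemma val_Zp_add p (x y : 'Z_p) : 1 < p -> (x + y)%R = (x + y) %% p :> nat.
Proof. by move=> p1; rewrite -[in LHS](natr_Zp x) -[in LHS](natr_Zp y) -natrD val_Zp_nat. Qed.

Lemma val_Zp_mulrn p (x : 'Z_p) m : 1 < p -> (x *+ m)%R = (x * m) %% p :> nat.
Proof. by move=> p1; rewrite -[in LHS](natr_Zp x) -mulrnA val_Zp_nat. Qed.

Lemma ltn_Zp p (x : 'Z_p) : 1 < p -> x < p.
Proof. by move=> p1; rewrite -[p in _ < p](Zp_cast p1) ltn_ord. Qed.

Lemma m_sum_free_windows p m X K (A : {set 'Z_p}) : 1 < p -> 2 * X + 2 * K < p ->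
  {in A, forall x : 'Z_p, x <= X \/ p - K <= x} ->
  {in A, forall x : 'Z_p, 2 * X < (x *+ m)%R < p - 2 * K} ->
  m_sum_free m A.
Proof.
move=> p1 hXK near0 good.
apply/forallP => x; apply/implyP => Ax; apply/forallP => y; apply/implyP => Ay.
apply/forallP => z; apply/implyP => Az; apply/negP => /eqP e.
have := good z Az; rewrite -e val_Zp_add //.
have xp := ltn_Zp x p1; have yp := ltn_Zp y p1.
have [sum_lt | sum_ge] := ltnP (x + y) p.
  by rewrite modn_small //; case: (near0 x Ax) (near0 y Ay); lia.
have -> : (x + y) %% p = x + y - p by rewrite -{1}(subnK sum_ge) modnDr modn_small; lia.
case: (near0 x Ax) (near0 y Ay); lia.
Qed.

Lemma edivn_uniq d s1 s2 t1 t2 : t1 < d -> t2 < d ->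
  s1 * d + t1 = s2 * d + t2 -> s1 = s2 /\ t1 = t2.
Proof.
move=> t1d t2d e; have d0 : 0 < d by lia.
split; first by have := congr1 (divn^~ d) e; rewrite !divnMDl // !divn_small // !addn0.
by have := congr1 (modn^~ d) e; rewrite !modnMDl_small.
Qed.

Section Construction.

Variables m n b r p : nat.
Hypotheses (m_eq : m = 4 * b + r) (r_lt4 : r < 4) (m_ge7 : 7 <= m) (n_gt0 : 0 < n)
  (p_eq : p = 4 * m ^ 2 * n + 1).

Let X := 4 * (m * n) * b.
Let K := m * n * r.
Let q := minn K (2 * (m * n) + 2 * n * r) - 2 * n * r.

Let mmn_eq : m * (m * n) = 4 * (m * n * b) + m * n * r.
Proof. by rewrite {1}m_eq; ring. Qed.

Let p_eq' : p = 4 * (m * (m * n)) + 1.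
Proof. by rewrite p_eq; ring. Qed.

Definition msf_index := ('I_b * 'I_(2 * (m * n)) + 'I_q)%type.

Definition msf_elt (i : msf_index) : nat :=
  match i with
  | inl (s, j) => 4 * (m * n) * s + (8 * n * b + 1 + j)
  | inr k => p - (2 * n * r + 1 + k)
  end.

Lemma msf_elt_inl_le sj : msf_elt (inl sj) <= X.
Proof.
case: sj => [[s hs] [j hj]] /=.
have : m * n * s.+1 <= m * n * b by rewrite leq_mul2l; lia.
have : n * (4 * b) <= n * m by rewrite leq_mul2l; lia.
lia.
Qed.

Lemma msf_elt_inr_ge k : p - K <= msf_elt (inr k) < p.
Proof. by case: k => k hk /=; rewrite /q in hk; lia. Qed.

Lemma msf_elt_window i : msf_elt i <= X \/ p - K <= msf_elt i < p.
Proof.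
by case: i => [sj | k]; [left; apply: msf_elt_inl_le | right; apply: msf_elt_inr_ge].
Qed.

Lemma msf_elt_good i : 2 * X < (msf_elt i * m) %% p < p - 2 * K.
Proof.
(* Both cases reduce modulo p through 4 m^2 n = p - 1. *)
case: i => [[[s hs] [j hj]] | [k hk]] /=.
  set c := 8 * n * b + 1 + j.
  have mc_le : m * j.+1 <= m * (2 * (m * n)) by rewrite leq_mul2l; lia.
  have -> : (4 * (m * n) * s + c) * m = s * p + (m * c - s).
    rewrite p_eq' /c; lia.
  rewrite modnMDl_small /X /K /c; lia.
have k_lt : 2 * n * r + 1 + k <= minn K (2 * (m * n) + 2 * n * r) by rewrite /q in hk; lia.
set c := 2 * n * r + 1 + k in k_lt *.
have mc_le : m * c <= m * (2 * (m * n) + 2 * n * r) by rewrite leq_mul2l; lia.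
have c_le : c * m <= p * m by rewrite leq_mul2r; lia.
have p_le : p <= m * p by rewrite leq_pmull; lia.
have -> : (p - c) * m = m.-1 * p + (p - m * c) by rewrite !mulnBl; lia.
rewrite modnMDl_small /X /K /c; lia.
Qed.

Lemma XK_lt_p : 2 * X + 2 * K < p.
Proof. rewrite /X /K; lia. Qed.

Lemma msf_elt_lt_p i : msf_elt i < p.
Proof. have := XK_lt_p; case: (msf_elt_window i); lia. Qed.

Lemma msf_elt_inj : injective msf_elt.
Proof.
have Xp := XK_lt_p.
case=> [[[s1 hs1] [j1 hj1]] | k1] [[[s2 hs2] [j2 hj2]] | k2] e.
- have : n * (4 * b) <= n * m by rewrite leq_mul2l; lia.
  have [] : s1 = s2 /\ 8 * n * b + j1 = 8 * n * b + j2.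
    by apply: (@edivn_uniq (4 * (m * n))); move: e => /=; lia.
  by move=> es ej _; congr (inl (_, _)); apply: val_inj => /=; lia.
- by have := msf_elt_inl_le (Ordinal hs1, Ordinal hj1); have := msf_elt_inr_ge k2; lia.
- by have := msf_elt_inl_le (Ordinal hs2, Ordinal hj2); have := msf_elt_inr_ge k1; lia.
- case: k1 k2 e => [k1 hk1] [k2 hk2] /= e.
  by congr inr; apply: val_inj => /=; rewrite /q in hk1 hk2; lia.
Qed.

Let p_gt1 : 1 < p. Proof. lia. Qed.

Definition msf_set : {set 'Z_p} := [set (msf_elt i)%:R | i : msf_index]%R.

Lemma val_msf_elt i : ((msf_elt i)%:R : 'Z_p)%R = msf_elt i :> nat.
Proof. by rewrite val_Zp_nat // modn_small // msf_elt_lt_p. Qed.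

Lemma msf_set_sum_free : m_sum_free m msf_set.
Proof.
apply: (m_sum_free_windows p_gt1 XK_lt_p).
  move=> _ /imsetP [i _ ->]; rewrite val_msf_elt.
  by case: (msf_elt_window i) => [|/andP []]; [left | right].
move=> _ /imsetP [i _ ->]; rewrite val_Zp_mulrn // val_msf_elt; exact: msf_elt_good.
Qed.

Lemma card_msf_set : m ^ 2 * n <= 2 * #|msf_set|.
Proof.
have inj : injective (fun i : msf_index => ((msf_elt i)%:R : 'Z_p)%R).
  by move=> i j e; apply: msf_elt_inj; rewrite -[msf_elt i]val_msf_elt e val_msf_elt.
rewrite card_imset // card_sum card_prod !card_ord /q /K.
have : n * r * 4 <= n * r * m by rewrite leq_mul2l; lia.
have : m * n * r <= m * n * 3 by rewrite leq_mul2l; lia.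
have -> : m ^ 2 * n = m * (m * n) by ring.
lia.
Qed.
End Construction.

Lemma max_msf_card_ge (m n p : nat) : 7 <= m -> 0 < n -> p = 4 * m ^ 2 * n + 1 ->
  p - 1 <= 8 * max_msf_card p m.
Proof.
move=> m_ge7 n_gt0 p_eq.
have m_eq : m = 4 * (m %/ 4) + m %% 4 by rewrite {1}(divn_eq m 4) mulnC.
have r_lt4 : m %% 4 < 4 by rewrite ltn_mod.
have card_ge := card_msf_set m_eq r_lt4 m_ge7 n_gt0 p_eq.
have : #|msf_set m n (m %/ 4) (m %% 4) p| <= max_msf_card p m.
  exact: leq_bigmax_cond (msf_set_sum_free m_eq r_lt4 m_ge7 n_gt0 p_eq).
lia.
Qed.

Local Open Scope ring_scope.

Lemma ratio_eighth_dichotomy (R : realFieldType) (M p : nat) :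
  (0 < p)%N -> (p <= 8 * M + 1)%N ->
  1 / 8 <= M%:R / p%:R :> R \/ M%:R / p%:R = 1 / 8 * (1 - 1 / p%:R) :> R.
Proof.
move=> p_gt0 p_le; have P_gt0 : 0 < p%:R :> R by rewrite ltr0n.
have [p_le8M | p_gt8M] := leqP p (8 * M).
  left; rewrite ler_pdivlMr //.
  have : p%:R <= (8 * M)%:R :> R by rewrite ler_nat.
  rewrite natrM; lra.
right; have : p%:R = 8 * M%:R + 1 :> R by rewrite -natrM natr1; congr _%:R; lia.
move=> P_eq; rewrite P_eq; field; rewrite -P_eq; lra.
Qed.

Lemma dm_dichotomy (R : realFieldType) m n p : (7 <= m)%N -> (0 < n)%N ->
  p = (4 * m ^ 2 * n + 1)%N -> 1 / 8 <= dm R m p \/ dm R m p = 1 / 8 * (1 - 1 / p%:R).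
Proof.
move=> m_ge7 n_gt0 p_eq; have := max_msf_card_ge m_ge7 n_gt0 p_eq.
by rewrite /dm => card_ge; apply: ratio_eighth_dichotomy; lia.
Qed.

Lemma dm_ge (R : realFieldType) m n p : (7 <= m)%N -> (0 < n)%N ->
  p = (4 * m ^ 2 * n + 1)%N -> 1 / 8 * (1 - 1 / p%:R) <= dm R m p.
Proof.
move=> m_ge7 n_gt0 p_eq; case: (dm_dichotomy R m_ge7 n_gt0 p_eq) => [dm_ge8 | ->] //.
apply: le_trans dm_ge8; have : 0 <= 1 / p%:R :> R by rewrite divr_ge0 ?ler0n.
lra.
Qed.

Lemma eighth_gap (R : realFieldType) (P1 P2 : R) : 1 <= P1 -> P1 + 1 <= P2 ->
  2 * (1 / 8 - 1 / 8 * (1 - 1 / P1)) ^+ 2 <= 1 / 8 * (1 - 1 / P2) - 1 / 8 * (1 - 1 / P1).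
Proof.
move=> P1_ge1 P12; rewrite -subr_ge0.
have -> : 1 / 8 * (1 - 1 / P2) - 1 / 8 * (1 - 1 / P1)
          - 2 * (1 / 8 - 1 / 8 * (1 - 1 / P1)) ^+ 2
        = (4 * P1 * (P2 - P1) - P2) / (32 * P1 * P1 * P2) by field; lra.
apply: divr_ge0; last by rewrite !mulr_ge0 //; lra.
nra.
Qed.

Lemma ge_eighth_of_lim (R : realFieldType) (u : nat -> R) (S : nat -> Prop) (L : R) :
  (forall B, exists2 p, S p & (B < p)%N) ->
  (forall p, S p -> 1 / 8 <= u p \/ u p = 1 / 8 * (1 - 1 / p%:R)) ->
  (forall eps, 0 < eps -> exists N, forall p, S p -> (N <= p)%N -> `|u p - L| < eps) ->
  1 / 8 <= L.
Proof.
move=> S_unbounded u_dich conv; rewrite leNgt; apply/negP => L_lt.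
pose d := 1 / 8 - L; have d_gt0 : 0 < d by rewrite /d; lra.
have [N1 conv1] := conv (d / 2) ltac:(lra).
have [N2 conv2] := conv (d ^+ 2 / 4) ltac:(by rewrite divr_gt0 ?exprn_gt0).
have [p1 S1 p1_gt] := S_unbounded (maxn N1 N2).
have [p2 S2 p2_gt] := S_unbounded p1.
have u_eq p : S p -> (maxn N1 N2 <= p)%N -> u p = 1 / 8 * (1 - 1 / p%:R).
  move=> Sp Np; have := conv1 p Sp (leq_trans (leq_maxl _ _) Np).
  rewrite ltr_norml /d => /andP [_ up_lt]; case: (u_dich p Sp) => //; lra.
have [N1p1 N2p1] : (N1 <= p1)%N /\ (N2 <= p1)%N by split; lia.
have N2p2 : (N2 <= p2)%N by lia.
have gap := @eighth_gap R p1%:R p2%:R; rewrite ler1n natr1 ler_nat in gap.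
have := conv1 p1 S1 N1p1; have := conv2 p1 S1 N2p1; have := conv2 p2 S2 N2p2.
rewrite !ltr_norml (u_eq p1) ?(u_eq p2) //; try lia.
move: gap; set f1 := 1 / 8 * _; set f2 := 1 / 8 * _ => gap.
have := gap ltac:(lia) p2_gt; rewrite /d; nra.
Qed.

Definition Cyclotomic_map (F : fieldType) (k : nat) : {poly F} := map_poly intr 'Phi_k.

Section CyclotomicMap.

Variable F : fieldType.

Lemma prod_Cyclotomic_map k : (0 < k)%N ->
  \prod_(d <- divisors k) Cyclotomic_map F d = 'X^k - 1.
Proof.
move=> k_gt0; have := congr1 (map_poly (intr : int -> F)) (prod_Cyclotomic k_gt0).
by rewrite rmorph_prod rmorphB /= map_polyXn rmorph1.
Qed.

Lemma root_Cyclotomic_map_expr k (x : F) : (0 < k)%N ->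
  root (Cyclotomic_map F k) x -> x ^+ k = 1.
Proof.
move=> k_gt0 /eqP rk; apply/eqP; rewrite -subr_eq0.
have := congr1 (horner^~ x) (prod_Cyclotomic_map k_gt0).
by rewrite horner_prod (big_rem k) /= -?dvdn_divisors // rk mul0r !hornerE => <-.
Qed.

Lemma root_Cyclotomic_map_divisor k (x : F) : (0 < k)%N -> x ^+ k = 1 ->
  exists2 d, (d %| k)%N & root (Cyclotomic_map F d) x.
Proof.
move=> k_gt0 xk; have : \prod_(d <- divisors k) (Cyclotomic_map F d).[x] == 0.
  by rewrite -horner_prod prod_Cyclotomic_map // !hornerE xk subrr.
by rewrite prodf_seq_eq0 => /hasP [d]; rewrite -dvdn_divisors //; exists d.
Qed.

Lemma root_Cyclotomic_map_excl k d (x : F) : (0 < k)%N -> k%:R != 0 :> F ->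
  (d %| k)%N -> d != k -> root (Cyclotomic_map F k) x -> ~~ root (Cyclotomic_map F d) x.
Proof.
move=> k_gt0 kF dk nek rk.
have dvd_Xk : Cyclotomic_map F k * Cyclotomic_map F d %| 'X^k - 1.
  rewrite -prod_Cyclotomic_map // (big_rem k) /= -?dvdn_divisors //.
  rewrite (big_rem d) /=; last first.
    by rewrite mem_rem_uniq ?divisors_uniq // inE nek -dvdn_divisors.
  by rewrite mulrA dvdp_mulr.
have cop := separable_coprime (separable_Xn_sub_1 kF) dvd_Xk.
by rewrite /root (coprimep_root cop rk).
Qed.

Lemma root_Cyclotomic_map_prim k (x : F) : (0 < k)%N -> k%:R != 0 :> F ->
  root (Cyclotomic_map F k) x -> k.-primitive_root x.
Proof.
move=> k_gt0 kF rk.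
have [o prim_o o_dvd] := prim_order_exists k_gt0 (root_Cyclotomic_map_expr k_gt0 rk).
have [d d_dvd rd] :=
  root_Cyclotomic_map_divisor (prim_order_gt0 prim_o) (prim_expr_order prim_o).
have [dk | nedk] := eqVneq d k; last first.
  by have := root_Cyclotomic_map_excl k_gt0 kF (dvdn_trans d_dvd o_dvd) nedk rk; rewrite rd.
by have -> : k = o by apply/eqP; rewrite eqn_dvd o_dvd -dk d_dvd.
Qed.

Lemma root_Cyclotomic_map_neq0 k (x : F) : (0 < k)%N ->
  root (Cyclotomic_map F k) x -> x != 0.
Proof.
move=> k_gt0 /(root_Cyclotomic_map_expr k_gt0); apply: contra_eqN => /eqP ->.
by rewrite expr0n gtn_eqF // eq_sym oner_eq0.
Qed.

End CyclotomicMap.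

Lemma expf_card_pred (F : finFieldType) (x : F) : x != 0 -> x ^+ #|F|.-1 = 1.
Proof.
move=> x_nz; apply: (mulIf x_nz); rewrite mul1r -exprSr prednK ?expf_card //.
exact: ltnW (finNzRing_gt1 F).
Qed.

Lemma Fp_nat_eq0 q n : prime q -> ((n%:R : 'F_q) == 0) = (q %| n)%N.
Proof. by move=> q_pr; rewrite -[n%:R]/((n%:Z)%:~R) -(dvdz_pcharf (pchar_Fp q_pr)). Qed.

Lemma Cyclotomic_Fp_root q k (c : int) : prime q -> (q%:Z %| ('Phi_k).[c])%Z ->
  root (Cyclotomic_map 'F_q k) c%:~R.
Proof.
move=> q_pr q_dvd; rewrite /root /Cyclotomic_map.
by rewrite (horner_map (intr : {rmorphism int -> 'F_q})) -(dvdz_pcharf (pchar_Fp q_pr)).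
Qed.

Lemma exists_nonroot (R : idomainType) (p : {poly R}) (f : nat -> R) :
  p != 0 -> injective f -> exists i, ~~ root p (f i).
Proof.
move=> p_nz f_inj.
have : ~~ all (root p) [seq f i | i <- iota 0 (size p)].
  apply/negP => all_roots.
  have := max_poly_roots p_nz all_roots (etrans (map_inj_uniq f_inj _) (iota_uniq 0 _)).
  by rewrite size_map size_iota ltnn.
by case/allPn => _ /mapP [i _ ->]; exists i.
Qed.

Lemma absz_gt1 (z : int) : z ^+ 3 != z -> (1 < `|z|)%N.
Proof. by case: z => [[|[|n]]|[|n]]. Qed.

Lemma Cyclotomic_multiple_gt1 (k a : nat) : (0 < k)%N -> (0 < a)%N ->
  exists c : nat, (a %| c)%N /\ (1 < `|('Phi_k).[c%:Z]|)%N.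
Proof.
move=> k_gt0 a_gt0; set Phi := 'Phi_k.
have Phi_nz : Phi != 0 by rewrite monic_neq0 // Cyclotomic_monic.
have size_Phi : size Phi = (totient k).+1 by apply: size_Cyclotomic.
have tk : (0 < totient k)%N by rewrite totient_gt0.
have g_nz : Phi ^+ 3 - Phi != 0.
  rewrite subr_eq0; apply/eqP => /(congr1 (fun p : {poly int} => (size p).-1)).
  rewrite size_exp size_Phi /=; lia.
have f_inj : injective (fun i => (a * i.+1)%N%:Z).
  by move=> i j /eqP; rewrite eqz_nat eqn_pmul2l // => /eqP [].
have [i] := exists_nonroot g_nz f_inj.
rewrite /root !hornerE subr_eq0; set z := Phi.[_] => z3.
exists (a * i.+1)%N; split; first exact: dvdn_mulr.
exact: absz_gt1.
Qed.

Lemma Cyclotomic_prime_dvd_pred q k (c : int) : prime q -> (0 < k)%N -> ~~ (q %| k)%N ->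
  (q%:Z %| ('Phi_k).[c])%Z -> (k %| q.-1)%N.
Proof.
move=> q_pr k_gt0 q_ndvd_k q_dvd.
have rc := Cyclotomic_Fp_root q_pr q_dvd.
have kF : k%:R != 0 :> 'F_q by rewrite Fp_nat_eq0.
rewrite (prim_order_dvd (root_Cyclotomic_map_prim k_gt0 kF rc)).
by have := expf_card_pred (root_Cyclotomic_map_neq0 k_gt0 rc); rewrite card_Fp // => ->.
Qed.

Lemma prime_1_mod_unbounded (k B : nat) : (0 < k)%N ->
  exists2 q, prime q & (B < q)%N && (k %| q.-1)%N.
Proof.
move=> k_gt0.
have kB_gt0 : (0 < k * B`!)%N by rewrite muln_gt0 k_gt0 fact_gt0.
have [c [kB_dvd_c Phi_gt1]] := Cyclotomic_multiple_gt1 k_gt0 kB_gt0.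
set z := ('Phi_k).[c%:Z] in Phi_gt1.
have q_pr := pdiv_prime Phi_gt1.
have q_dvd : ((pdiv `|z|)%:Z %| z)%Z by rewrite dvdzE absz_nat pdiv_dvd.
have q_ndvd_c : ~~ (pdiv `|z| %| c)%N.
  by rewrite -Fp_nat_eq0 // (root_Cyclotomic_map_neq0 k_gt0 (Cyclotomic_Fp_root q_pr q_dvd)).
exists (pdiv `|z|) => //; apply/andP; split.
  rewrite ltnNge; apply: contra q_ndvd_c => q_le_B.
  by apply: dvdn_trans kB_dvd_c; rewrite dvdn_mull // dvdn_fact // prime_gt0.
apply: Cyclotomic_prime_dvd_pred q_dvd => //.
by apply: contra q_ndvd_c => q_dvd_k; apply: dvdn_trans kB_dvd_c; rewrite dvdn_mulr.
Qed.

Theorem lemma3p1 (m : nat) (hm : (7 <= m)%N) :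
  (forall n p : nat, (0 < n)%N -> p = (4 * m ^ 2 * n + 1)%N -> prime p ->
     (1 / 8) * (1 - 1 / p%:R) <= dm rat m p)
  /\
  (forall (R : realFieldType) (L : R),
     (forall eps : R, 0 < eps -> exists N : nat,
        forall p : nat, prime p -> (N <= p)%N -> `|dm R m p - L| < eps) ->
     1 / 8 <= L).
Proof.
split=> [n p n_gt0 p_eq _ | R L conv]; first exact: dm_ge hm n_gt0 p_eq.
pose S p := prime p /\ exists2 n, (0 < n)%N & p = (4 * m ^ 2 * n + 1)%N.
apply: (@ge_eighth_of_lim R (dm R m) S).
- move=> B; have k_gt0 : (0 < 4 * m ^ 2)%N by rewrite muln_gt0 expn_gt0; lia.
  have [q q_pr /andP [B_lt k_dvd]] := prime_1_mod_unbounded B k_gt0.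
  have q_gt1 := prime_gt1 q_pr.
  exists q => //; split => //; exists (q.-1 %/ (4 * m ^ 2))%N.
    by rewrite divn_gt0 // dvdn_leq //; lia.
  by rewrite mulnC divnK //; lia.
- by move=> p [_ [n n_gt0 p_eq]]; apply: dm_dichotomy n_gt0 p_eq.
- move=> eps eps_gt0; have [N convN] := conv eps eps_gt0.
  by exists N => p [p_pr _]; apply: convN.
Qed.
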